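(* Let $n\in\mathbb N$, let $A$ be a Young function satisfying (C1), (C2), (C3), and let $\varphi$ be a gauge function. Then $\psi(st)\le\varphi(t)+t^nB(s)$ for all $s,t>0$.
   Context: A gauge function is a function $\varphi\colon[0,\infty)\to[0,\infty)$ that is increasing, continuous and vanishes only at $0$, and (standing assumption) such that $r\mapsto\varphi(r)/r^n$ is non-increasing on $(0,\infty)$. A Young function is a non-trivial convex $A\colon[0,\infty)\to[0,\infty]$ with $A(0)=0$; $\widetilde A(t)=\sup_{\tau\ge0}(\tau t-A(\tau))$. Conditions: (C1) if $n=1$, $\lim_{t\to\infty}t/A(t)=0$; if $n\ge2$, $\int^\infty (t/A(t))^{1/(n-1)}dt<\infty$. (C2) $0<A(t)<\infty$ for $t>0$. (C3) if $n=1$, $\lim_{t\to0^+}t/A(t)=\infty$; if $n\ge2$, $\int_0(t/A(t))^{1/(n-1)}dt=\infty$. $B=A$ if $n=1$; for $n\ge2$, $B$ is the Young conjugate of $t\mapsto t^{n'}\int_t^\infty\widetilde A(s)s^{-1-n'}ds$, $n'=n/(n-1)$. $J(0)=0$, $J(s)=s\,B^{-1}(\varphi(s)/s^n)$ for $s>0$ (an increasing bijection of $[0,\infty)$), and $\psi(r)=\varphi(J^{-1}(r))$ for $r\ge0$. *)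

From HB Require Import structures.
From mathcomp Require Import all_boot all_order all_algebra.
From mathcomp Require Import all_classical all_reals all_analysis.
Set Implicit Arguments. Unset Strict Implicit. Unset Printing Implicit Defensive.
Import Order.TTheory GRing.Theory Num.Theory.
Import numFieldNormedType.Exports.
Local Open Scope classical_set_scope.
Local Open Scope ring_scope.

Section Defs.
Variable R : realType.

Definition gauge (n : nat) (phi : R -> R) : Prop :=
  [/\ (forall r, 0 <= r -> 0 <= phi r),
      (forall r1 r2, 0 <= r1 -> r1 <= r2 -> phi r1 <= phi r2),
      {within `[0, +oo[, continuous phi},
      phi 0 = 0 /\ (forall r, 0 < r -> phi r != 0)
    & (forall r1 r2, 0 < r1 -> r1 <= r2 -> phi r2 / r2 ^+ n <= phi r1 / r1 ^+ n)].

(* Young function A : [0,oo) -> [0,oo] (values outside [0,oo) irrelevant). *)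
Definition young_function (A : R -> \bar R) : Prop :=
  [/\ A 0 = 0%E,
      (forall t : R, 0 <= t -> (0 <= A t)%E),
      (forall x y l : R, 0 <= x -> 0 <= y -> (0 <= l <= 1)%R ->
         (A (l * x + (1 - l) * y)%R <= l%:E * A x + (1 - l)%:E * A y)%E)
    & (exists t : R, 0 < t /\ A t != 0%E) /\ (exists t : R, 0 < t /\ A t != +oo%E)].

Definition young_conj (A : R -> \bar R) (t : R) : \bar R :=
  ereal_sup [set x | exists2 tau : R, 0 <= tau & x = ((tau * t)%:E - A tau)%E].

Definition nprime (n : nat) : R := n%:R / (n.-1)%:R.

Definition Eaux (n : nat) (A : R -> \bar R) (t : R) : \bar R :=
  ((t `^ nprime n)%:E *
   \int[lebesgue_measure]_(s in `[t, +oo[%classic) (young_conj A s * (s `^ (-1 - nprime n))%:E))%E.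

Definition Bfun (n : nat) (A : R -> \bar R) : R -> \bar R :=
  if n == 1%N then A else young_conj (Eaux n A).

Definition Binv (B : R -> \bar R) (r : R) : \bar R :=
  ereal_sup [set x | exists2 tau : R, 0 <= tau /\ (B tau <= r%:E)%E & x = tau%:E].

Definition Jfun (n : nat) (A : R -> \bar R) (phi : R -> R) (s : R) : \bar R :=
  if s == 0 then 0%E else (s%:E * Binv (Bfun n A) (phi s / s ^+ n))%E.

(* inverse of the increasing bijection J of [0,oo) *)
Definition Jinv (n : nat) (A : R -> \bar R) (phi : R -> R) (r : R) : R :=
  fine (ereal_sup [set x | exists2 u : R, 0 <= u /\ (Jfun n A phi u <= r%:E)%E & x = u%:E]).

Definition psi (n : nat) (A : R -> \bar R) (phi : R -> R) (r : R) : R :=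
  phi (Jinv n A phi r).

Definition cond_C1 (n : nat) (A : R -> \bar R) : Prop :=
  if n == 1%N then (fun t => t / fine (A t)) @ +oo --> (0 : R)
  else exists a : R, 0 < a /\
    (\int[lebesgue_measure]_(t in `[a, +oo[%classic)
        ((t / fine (A t)) `^ ((n.-1)%:R)^-1)%:E < +oo)%E.

Definition cond_C2 (A : R -> \bar R) : Prop :=
  forall t : R, 0 < t -> (0 < A t)%E /\ (A t < +oo)%E.

Definition cond_C3 (n : nat) (A : R -> \bar R) : Prop :=
  if n == 1%N then (fun t => t / fine (A t)) @ 0^'+ --> +oo
  else forall a : R, 0 < a ->
    (\int[lebesgue_measure]_(t in `]0%R, a]%classic) ((t / fine (A t)) `^ ((n.-1)%:R)^-1)%:E = +oo)%E.

End Defs.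

From HB Require Import structures.
From mathcomp Require Import all_boot all_order all_algebra.
From mathcomp Require Import all_classical all_reals all_analysis.
From mathcomp Require Import ring.
Set Implicit Arguments. Unset Strict Implicit. Unset Printing Implicit Defensive.
Import Order.TTheory GRing.Theory Num.Theory.
Import numFieldNormedType.Exports.
Local Open Scope ring_scope.
Local Open Scope classical_set_scope.

(* The key fact is the scaling inequality B(l s) <= l^n B(s) for 0 < l <= 1:
   for n = 1 it is convexity of A, and for n >= 2 it passes through the Young
   conjugate from mu^n' E(x) <= E(mu x), where E(x) = x^n' \int_x^oo ... .
   Put u = J^-1(s t).  If u <= t, monotonicity of phi gives psi(s t) <= phi t.
   Otherwise, for v in (t, u] with J(v) <= s t we get B^-1(phi(v)/v^n) <= s t/v,
   so for every w in (t, v] scaling gives phi(v)/v^n < B(s w/v) <= (w/v)^n B(s),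
   i.e. phi(v) < w^n B(s).  Letting w -> t, and then v -> u by continuity of
   phi, yields psi(s t) = phi(u) <= t^n B(s). *)

Section ScalingOfB.
Variable R : realType.
Local Open Scope ereal_scope.

(* Unlike [ge0_subset_integral], no measurability of [f] is required. *)
Lemma subset_ge0_integral (D1 D2 : set R) (f : R -> \bar R) : D1 `<=` D2 ->
  (forall x, D2 x -> 0 <= f x) ->
  \int[lebesgue_measure]_(x in D1) f x <= \int[lebesgue_measure]_(x in D2) f x.
Proof.
move=> D12 f0; rewrite !ge0_integralE//; last by move=> x /D12/f0.
apply: ereal_sup_le => _ [h /= hf <-]; exists h => //= x.
apply: (le_trans (hf x)); rewrite /patch.
case: ifPn => [/set_mem xD1|_]; first by rewrite ifT//; apply/mem_set/D12.
by case: ifPn => // /set_mem /f0.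
Qed.

Lemma young_conj_ge0 (A : R -> \bar R) t : A 0%R = 0 -> 0 <= young_conj A t.
Proof.
by move=> A0; apply: ereal_sup_ubound; exists 0%R => //; rewrite mul0r A0 sube0.
Qed.

Lemma young_conj_scale (E : R -> \bar R) (c mu s : R) : (0 < c)%R -> (0 < mu)%R ->
  (forall rho, (0 <= rho)%R -> 0 <= E rho) ->
  (forall rho, (0 <= rho)%R -> c%:E * E rho <= E (mu * rho)%R) ->
  young_conj E (c / mu * s) <= c%:E * young_conj E s.
Proof.
move=> c0 mu0 E0 hE; apply: ge_ereal_sup => _ [tau tau0 ->].
have rho0 : (0 <= tau / mu)%R by rewrite divr_ge0// ltW.
have -> : tau = (mu * (tau / mu))%R by rewrite mulrC divfK// gt_eqF.
move: (tau / mu)%R rho0 => rho rho0.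
have := hE rho rho0; case Er: (E rho) (E0 rho rho0) => [e| |] // _ hle.
- apply: le_trans (leeB (lexx _) hle) _; rewrite -EFinM -EFinB.
  have -> : (mu * rho * (c / mu * s) - c * e = c * (rho * s - e))%R.
    by field; rewrite gt_eqF.
  rewrite EFinM; apply: lee_wpmul2l; first by rewrite lee_fin ltW.
  by apply: ereal_sup_ubound; exists rho => //; rewrite Er.
- have -> : E (mu * rho)%R = +oo.
    by apply/eqP; rewrite -leye_eq; apply: le_trans hle; rewrite gt0_muley ?lte_fin.
  by rewrite leNye.
Qed.

Lemma Eaux_ge0 n (A : R -> \bar R) x : A 0%R = 0 -> (0 <= x)%R -> 0 <= Eaux n A x.
Proof.
move=> A0 x0; rewrite /Eaux mule_ge0// ?lee_fin ?powR_ge0//.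
by apply: integral_ge0 => s _; rewrite mule_ge0// ?young_conj_ge0// lee_fin powR_ge0.
Qed.

Lemma Eaux_scale n (A : R -> \bar R) (mu x : R) : A 0%R = 0 ->
  (0 < mu <= 1)%R -> (0 <= x)%R ->
  (mu `^ nprime R n)%:E * Eaux n A x <= Eaux n A (mu * x).
Proof.
move=> A0 /andP[mu0 mu1] x0; rewrite /Eaux powRM ?(ltW mu0)// EFinM -muleA.
do 2 (apply: lee_wpmul2l; first by rewrite lee_fin powR_ge0).
apply: subset_ge0_integral => [y|s]; rewrite /= !in_itv /= !andbT.
  by apply: le_trans; rewrite ler_piMl.
by move=> _; rewrite mule_ge0// ?young_conj_ge0// lee_fin powR_ge0.
Qed.

Lemma Bfun_ge0 n (A : R -> \bar R) s : young_function A -> (0 < n)%N ->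
  (0 <= s)%R -> 0 <= Bfun n A s.
Proof.
move=> [A0 Age0 _ _] n0 s0; rewrite /Bfun; case: ifPn => [_|n1]; first exact: Age0.
apply: young_conj_ge0; rewrite /Eaux powR0 ?mul0e// /nprime.
by rewrite mulf_neq0 ?invr_eq0 ?pnatr_eq0 -?lt0n//; move: n0 n1; case: (n) => [|[]].
Qed.

Lemma Bfun_scale n (A : R -> \bar R) (l s : R) : young_function A -> (0 < n)%N ->
  (0 <= s)%R -> (0 < l <= 1)%R -> Bfun n A (l * s) <= (l ^+ n)%:E * Bfun n A s.
Proof.
move=> [A0 _ Aconv _] n0 s0 /andP[l0 l1]; rewrite /Bfun; case: ifPn => [/eqP n1|n1].
  have := Aconv s 0%R l s0 (lexx _); rewrite ltW ?l1 //= => /(_ isT).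
  by rewrite mulr0 addr0 A0 mule0 adde0 n1 expr1.
have n2 : (n.-1 != 0)%N by move: n0 n1; case: (n) => [|[]].
have lm0 : (0 < l ^+ n.-1)%R by rewrite exprn_gt0.
have {1}-> : l = (l ^+ n / l ^+ n.-1)%R.
  by rewrite -(prednK n0) exprS mulfK ?gt_eqF.
apply: young_conj_scale => [||rho|rho rho0]; rewrite ?exprn_gt0//.
  exact: Eaux_ge0.
have <- : ((l ^+ n.-1) `^ nprime R n = l ^+ n)%R.
  rewrite -powR_mulrn ?(ltW l0)// -powRrM /nprime mulrC divfK ?powR_mulrn ?(ltW l0)//.
  by rewrite pnatr_eq0.
by apply: Eaux_scale; rewrite // lm0 exprn_ile1// ltW.
Qed.

End ScalingOfB.

Section Exponent.
Variable R : realType.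

Lemma le_exprn_mul_of_gt (n : nat) (x b t v : R) : (0 < n)%N -> 0 < t -> t < v ->
  0 <= x -> (forall w, t < w -> w <= v -> x < w ^+ n * b) -> x <= t ^+ n * b.
Proof.
move=> n0 t0 tv x0 hw.
have b0 : 0 < b.
  rewrite ltNge; apply/negP => b0; have := hw v tv (lexx _).
  by rewrite ltNge (le_trans _ x0)// mulr_ge0_le0// exprn_ge0// (le_trans (ltW t0) (ltW tv)).
pose c := (x / b) `^ n%:R^-1.
have xc : x = c ^+ n * b.
  rewrite -powR_mulrn ?powR_ge0// -powRrM mulVf ?pnatr_eq0 -?lt0n// powRr1.
    by rewrite divfK// gt_eqF.
  by rewrite divr_ge0// ltW.
suff ct : c <= t by rewrite xc ler_pM2r// lerXn2r// nnegrE ?powR_ge0// ltW.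
rewrite leNgt; apply/negP => tc.
have tw : t < Order.min c v by rewrite lt_min tc tv.
have := hw _ tw; rewrite ge_min lexx orbT xc ltr_pM2r// => /(_ isT).
rewrite ltr_pXn2r// ?nnegrE ?powR_ge0//; first by rewrite ltNge ge_min lexx.
exact: le_trans (ltW t0) (ltW tw).
Qed.

End Exponent.

Section Supremum.
Variable R : realType.
Local Open Scope ereal_scope.

Lemma continuous_le_at_ereal_sup (f : R -> R) (P : R -> Prop) (u t K : R) :
  ereal_sup [set x | exists2 v, P v & x = v%:E] = u%:E -> (t < u)%R ->
  {for u, continuous f} -> (forall v, P v -> (t < v)%R -> (f v <= K)%R) ->
  (f u <= K)%R.
Proof.
move=> supu tu fu fle; rewrite leNgt; apply/negP => Kfu.
have [d /= d0 hd] := iffLR (nbhs_ballP _ _) (cvgr_gt _ fu _ Kfu).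
have : (Order.max t (u - d))%:E < u%:E by rewrite lte_fin gt_max tu ltrBlDr ltrDl d0.
rewrite -supu => /ereal_sup_gt[_ [v Pv ->]].
rewrite lte_fin gt_max => /andP[tv dv].
have : v%:E <= u%:E by rewrite -supu; apply: ereal_sup_ubound; exists v.
rewrite lee_fin => vu; have := fle v Pv tv; apply/negP; rewrite -ltNge; apply: hd.
by rewrite /ball /= ger0_norm ?subr_ge0// ltrBlDr addrC -ltrBlDr.
Qed.

End Supremum.

Section JInverse.
Variable R : realType.
Local Open Scope ereal_scope.

Lemma Binv_le_lt (B : R -> \bar R) (r x tau : R) :
  Binv B r <= x%:E -> (0 <= tau)%R -> (x < tau)%R -> r%:E < B tau.
Proof.
move=> Bx tau0 xtau; rewrite ltNge; apply/negP => Btau.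
have : tau%:E <= Binv B r by apply: ereal_sup_ubound; exists tau.
by move=> /le_trans /(_ Bx); rewrite lee_fin leNgt xtau.
Qed.

Lemma Jfun_le_Binv n (A : R -> \bar R) (phi : R -> R) (v r : R) : (0 < v)%R ->
  Jfun n A phi v <= r%:E -> Binv (Bfun n A) (phi v / v ^+ n) <= (r / v)%:E.
Proof.
rewrite /Jfun => v0; rewrite gt_eqF//.
case: (Binv _ _) => [x| |] //=; last by rewrite leNye.
  by rewrite -EFinM !lee_fin ler_pdivlMr// mulrC.
by rewrite gt0_muley ?lte_fin.
Qed.

Lemma gauge_le_of_Jfun_le n (A : R -> \bar R) (phi : R -> R) (s t b v : R) :
  young_function A -> (0 < n)%N -> gauge n phi -> (0 < s)%R -> (0 < t)%R ->
  Bfun n A s = b%:E -> (t < v)%R -> Jfun n A phi v <= (s * t)%:E ->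
  (phi v <= t ^+ n * b)%R.
Proof.
move=> hA n0 [phi0 _ _ _ _] s0 t0 Bs tv /Jfun_le_Binv Binvle.
have v0 : (0 < v)%R by apply: lt_trans tv.
apply: (le_exprn_mul_of_gt (b := b) n0 t0 tv (phi0 v (ltW v0))) => w tw wv.
have l0 : (0 < w / v)%R by rewrite divr_gt0// (lt_trans t0).
have l1 : (w / v <= 1)%R by rewrite ler_pdivrMr// mul1r.
have := Binv_le_lt (Binvle v0) (mulr_ge0 (ltW l0) (ltW s0)).
have -> : (s * t / v < w / v * s)%R.
  by rewrite [(w / v * s)%R]mulrC mulrA ltr_pM2r ?invr_gt0// ltr_pM2l.
move=> /(_ isT) /lt_le_trans /(_ (Bfun_scale hA n0 (ltW s0) (andb_true_intro (conj l0 l1)))).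
rewrite Bs -EFinM lte_fin expr_div_n mulrAC.
by rewrite ltr_pM2r// invr_gt0 exprn_gt0.
Qed.

End JInverse.

Theorem lemma4p4 (R : realType) (n : nat) (A : R -> \bar R) (phi : R -> R) :
  (0 < n)%N ->
  young_function A -> cond_C1 n A -> cond_C2 A -> cond_C3 n A ->
  gauge n phi ->
  forall s t : R, 0 < s -> 0 < t ->
    ((psi n A phi (s * t))%:E <= (phi t)%:E + (t ^+ n)%:E * Bfun n A s)%E.
Proof.
move=> n0 hA _ _ _ hphi s t s0 t0.
have [phi_ge0 phi_mono phi_cont [phi0 _] _] := hphi.
have phit0 : 0 <= phi t by rewrite phi_ge0// ltW.
case Bs: (Bfun n A s) (Bfun_ge0 hA n0 (ltW s0)) => [b| |] // b0; last first.
  by rewrite gt0_muley ?lte_fin ?exprn_gt0// addey// leey.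
have tnb0 : 0 <= t ^+ n * b by rewrite mulr_ge0 ?exprn_ge0 -?lee_fin// ltW.
rewrite -EFinM -EFinD lee_fin /psi /Jinv.
set U := ereal_sup _.
have : (0 <= U)%E.
  apply: ereal_sup_ubound; exists 0%R => //; split => //.
  by rewrite /Jfun eqxx lee_fin mulr_ge0// ltW.
(* [fine] sends [+oo] to [0], where [phi] vanishes *)
case HU: U => [u| |] //= u0; last by rewrite phi0 addr_ge0.
rewrite lee_fin in u0.
have [ut|tu] := leP u t; first by rewrite ler_wpDr// phi_mono.
rewrite ler_wpDl//; apply: (continuous_le_at_ereal_sup HU tu).
  move/continuous_within_itvcyP: phi_cont => [+ _]; apply.
  by rewrite in_itv /= andbT (lt_trans t0 tu).
by move=> v [_ Jv] tv; apply: gauge_le_of_Jfun_le Bs tv Jv.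
Qed.
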